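(* Let $\mathcal{G}$, $u$, $v$ be as in the context, and suppose the weights of the red edges $e$ are independent random variables, each with a probability density function $f_e:(0,\infty)\to[0,\phi_e]$ for some $\phi_e>0$, while green edge weights are fixed. Then for every $0\le r<r_{tot}$ and every $\varepsilon>0$, $$\mathbb{P}\big(\Delta(r)\le r+\varepsilon\big)\le\Big(\sum_{e\text{ red}}\phi_e\Big)\cdot\varepsilon .$$
   Context: $\mathcal{G}=\langle V,E,\omega,\lambda\rangle$ is a finite weighted coloured--edge graph (directed multigraph, weights $\omega:E\to\mathbb{R}^+$, colours $\lambda:E\to M$) with $M=\{\text{red},\text{green}\}$. A path from $u$ to $v$ is a sequence of consecutive edges from $u$ to $v$ visiting no vertex twice; $\omega_{\text{red}}(p)$, $\omega_{\text{green}}(p)$ denote the sums of weights of the red, resp. green, edges of $p$. A path $p$ from $u$ to $v$ is minimal if there is no path $q$ from $u$ to $v$ with $\omega_{\text{red}}(q)\le\omega_{\text{red}}(p)$, $\omega_{\text{green}}(q)\le\omega_{\text{green}}(p)$ and at least one inequality strict. It is assumed there is a path from $u$ to $v$ all of whose edges are green and a path from $u$ to $v$ all of whose edges are red; $r_{tot}$ is the least red weight of a path from $u$ to $v$ all of whose edges are red. For $0\le r<r_{tot}$, $\Delta(r)$ is the least value of $\omega_{\text{red}}(q)$ over all minimal paths $q$ from $u$ to $v$ with $\omega_{\text{red}}(q)>r$. *)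

From HB Require Import structures.
From mathcomp Require Import all_boot all_order all_algebra.
From mathcomp Require Import all_classical all_reals all_analysis.
Set Implicit Arguments. Unset Strict Implicit. Unset Printing Implicit Defensive.
Import Order.TTheory GRing.Theory Num.Theory.
Local Open Scope classical_set_scope.
Local Open Scope ring_scope.

Section Graph.
Variables (R : realType) (V E : finType) (src tgt : E -> V) (red : E -> bool).

Fixpoint walk (x y : V) (s : seq E) : bool :=
  match s with
  | [::] => x == y
  | e :: s' => (src e == x) && walk (tgt e) y s'
  end.

Definition is_path (x y : V) (s : seq E) : bool :=
  walk x y s && uniq (x :: map tgt s).

Definition wred (w : E -> R) (s : seq E) : R := \sum_(e <- s | red e) w e.
Definition wgreen (w : E -> R) (s : seq E) : R := \sum_(e <- s | ~~ red e) w e.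

Definition minimal_path (w : E -> R) (x y : V) (p : seq E) : Prop :=
  is_path x y p /\
  ~ (exists q, [/\ is_path x y q, wred w q <= wred w p, wgreen w q <= wgreen w p
                 & (wred w q < wred w p) || (wgreen w q < wgreen w p)]).

Definition r_tot (w : E -> R) (x y : V) : R :=
  inf [set t | exists s, [/\ is_path x y s, all red s & t = wred w s]].

Definition Delta (w : E -> R) (x y : V) (r : R) : R :=
  inf [set t | exists q, [/\ minimal_path w x y q, r < wred w q & t = wred w q]].

End Graph.

Definition independent_rvs {d} {Omega : measurableType d} {R : realType}
  {I : finType} (P : probability Omega R) (Pe : pred I) (X : I -> Omega -> R) : Prop :=
  forall (S : {set I}) (A : I -> set R),
    (forall i, i \in S -> Pe i) ->
    (forall i, measurable (A i)) ->
    P (\bigcap_(i in [set i | i \in S]) (X i @^-1` A i)) =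
    (\prod_(i in S) P (X i @^-1` A i))%E.

Definition has_density {d} {Omega : measurableType d} {R : realType}
  (P : probability Omega R) (X : Omega -> R) (f : R -> R) : Prop :=
  forall A : set R, measurable A ->
    P (X @^-1` A) = (\int[lebesgue_measure]_(x in A) (f x)%:E)%E.

(* Let [p]
   be a path of red weight at most [r] with least green weight (an all-green path
   exists, and [p] is not all red) and [q] a path greener than [p] with least red
   weight.  Then [r < wred q <= r + eps], and [q] has a red edge [e] outside [p].
   Re-choosing [p] among paths avoiding [e] and [q] among paths through [e] (the
   "pivot") makes both choices depend only on the weights other than [x e], while
   [x e] lies in the window [(r - rest, r - rest + eps]] with [rest] the red weight
   of [q] off [e].  Since [W e] is independent of the other weights and has density
   at most [phi e], this has probability at most [phi e * eps]; a union bound over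
   [e] concludes.  To avoid conditioning, the value [r - rest + eps] is located in
   a mesh of width [dl], giving [phi e * (dl + eps)], and [dl] is then sent to 0. *)

From HB Require Import structures.
From mathcomp Require Import all_boot all_order all_algebra.
From mathcomp Require Import all_classical all_reals all_analysis.
From mathcomp Require Import lra.
Import Order.TTheory GRing.Theory Num.Theory.
Local Open Scope classical_set_scope.
Local Open Scope ring_scope.
Set Implicit Arguments. Unset Strict Implicit. Unset Printing Implicit Defensive.

Section measurable_bool.
Context d (T : measurableType d) (R : realType).
Implicit Types (D : set T) (f g : T -> bool).

Lemma measurable_bool_set f : measurable_fun setT f -> measurable [set x | f x].
Proof. by move=> mf; have := mf measurableT [set true] I; rewrite setTI. Qed.

Lemma measurable_implyb D f g : measurable_fun D f -> measurable_fun D g ->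
  measurable_fun D (fun x => f x ==> g x).
Proof.
move=> mf mg; under eq_fun do rewrite implybE.
by apply: measurable_or => //; exact: measurable_neg.
Qed.

Lemma measurable_all D (I : Type) (s : seq I) (b : I -> T -> bool) :
  (forall i, measurable_fun D (b i)) -> measurable_fun D (fun x => all (b^~ x) s).
Proof.
by move=> mb; elim: s => [|i s IH] /=; [exact: measurable_cst | exact: measurable_and].
Qed.

Lemma measurable_has D (I : Type) (s : seq I) (b : I -> T -> bool) :
  (forall i, measurable_fun D (b i)) -> measurable_fun D (fun x => has (b^~ x) s).
Proof.
by move=> mb; elim: s => [|i s IH] /=; [exact: measurable_cst | exact: measurable_or].
Qed.

Lemma measurable_sum_cond D (I : Type) (s : seq I) (P : pred I) (h : I -> T -> R) :
  (forall i, P i -> measurable_fun D (h i)) ->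
  measurable_fun D (fun x => \sum_(i <- s | P i) h i x).
Proof.
move=> mh; rewrite (_ : (fun x => _) = fun x => \sum_(i <- s) if P i then h i x else 0).
  by apply: measurable_sum => i; case Pi: (P i); [exact: mh | exact: measurable_cst].
by apply/funext => x; rewrite big_mkcond.
Qed.

End measurable_bool.

Ltac measurable_bool leaf :=
  repeat first [ apply: measurable_and | apply: measurable_or | apply: measurable_neg
    | apply: measurable_implyb | (apply: measurable_all => ?) | (apply: measurable_has => ?)
    | apply: measurable_realfun.measurable_fun_ler
    | apply: measurable_realfun.measurable_fun_ltr
    | apply: measurable_realfun.measurable_funB | exact: measurable_cst | leaf ].

Fixpoint seqs_upto (T : finType) n : seq (seq T) :=
  if n is n'.+1 then [::] :: [seq x :: s | x <- enum T, s <- seqs_upto T n']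
  else [:: [::]].

Lemma mem_seqs_upto (T : finType) n (s : seq T) :
  (size s <= n)%N -> s \in seqs_upto T n.
Proof.
elim: n s => [|n IH] [|x s] //= hs; rewrite inE //=.
by apply: allpairs_f; [exact: mem_enum | exact: IH].
Qed.

Lemma seq_argmin (T : eqType) d (O : orderType d) (s : seq T) (P : pred T)
    (F : T -> O) : has P s ->
  exists t0, [/\ t0 \in s, P t0 & forall t, t \in s -> P t -> (F t0 <= F t)%O].
Proof.
elim: s => [|a s IH] //= hP.
have mem_consE t : t \in a :: s -> P t -> t = a \/ t \in s.
  by rewrite inE => /orP [/eqP|] ->; [left | right].
case: (boolP (has P s)) => [/IH [t0 [t0s Pt0 min0]] | /hasPn noP].
  case: (boolP (P a && (F a <= F t0)%O)) => [/andP [Pa le] | nle].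
    exists a; split; rewrite ?mem_head // => t /mem_consE H Pt.
    by case: (H Pt) => [-> // | ts]; exact: le_trans le (min0 t ts Pt).
  exists t0; split; rewrite ?inE ?t0s ?orbT // => t /mem_consE H Pt.
  case: (H Pt) => [ta | ts]; last exact: min0.
  by move: nle; rewrite -ta Pt /= -ltNge => /ltW.
have Pa : P a by move: hP; case: (P a) => //= /hasP [t /noP /negbTE ->].
exists a; split; rewrite ?mem_head // => t /mem_consE H Pt.
by case: (H Pt) => [-> // | /noP]; rewrite Pt.
Qed.

Lemma inf_eq_min (R : realType) (S : set R) m : S m -> lbound S m -> inf S = m.
Proof.
move=> Sm lbm; apply/le_anti; rewrite lb_le_inf ?andbT //; last by exists m.
by apply: ge_inf Sm; exists m.
Qed.

Section weighted_paths.
Variables (R : realType) (V E : finType) (src tgt : E -> V) (red : E -> bool) (u v : V).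
Implicit Types (x : E -> R) (e : E) (s p q : seq E) (Q : pred (seq E)) (F : seq E -> R).

Local Notation is_path := (is_path src tgt).
(* Every path lies in this finite list, so quantifiers over paths become boolean
   [all]/[has], which keeps the events below measurable. *)
Local Notation paths := (seqs_upto E #|E|).
Local Notation wred := (wred red).
Local Notation wgreen := (wgreen red).

Lemma path_uniq a b s : is_path a b s -> uniq s.
Proof. by case/andP=> _ /= /andP [_ /map_uniq]. Qed.

Lemma mem_paths a b s : is_path a b s -> s \in paths.
Proof.
move=> /path_uniq /card_uniqP sizeE; apply: mem_seqs_upto.
by rewrite -sizeE max_card.
Qed.

Definition argmin_path (Q : pred (seq E)) (F : seq E -> R) p :=
  [&& is_path u v p, Q p & all (fun s => is_path u v s && Q s ==> (F p <= F s)) paths].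

Lemma argmin_pathP Q F p :
  reflect [/\ is_path u v p, Q p & forall s, is_path u v s -> Q s -> F p <= F s]
          (argmin_path Q F p).
Proof.
apply: (iffP and3P) => [[pp Qp /allP minp] | [pp Qp minp]]; split => //.
  by move=> s ps Qs; apply: (implyP (minp s (mem_paths ps))); rewrite ps.
by apply/allP => s _; apply/implyP => /andP [ps Qs]; exact: minp.
Qed.

Lemma exists_argmin_path Q F :
  (exists s, is_path u v s && Q s) -> exists p, argmin_path Q F p.
Proof.
move=> [s0 /andP [ps0 Qs0]].
have [|p [_ /andP [pp Qp] minp]] :=
  seq_argmin (P := fun s => is_path u v s && Q s) F (_ : has _ paths).
  by apply/hasP; exists s0; rewrite ?ps0 ?(mem_paths ps0).
exists p; apply/argmin_pathP; split => // s ps Qs.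
by apply: minp; rewrite ?ps ?(mem_paths ps).
Qed.

Lemma argmin_path_eq Q F p p' :
  argmin_path Q F p -> argmin_path Q F p' -> F p = F p'.
Proof.
move=> /argmin_pathP [pp Qp minp] /argmin_pathP [pp' Qp' minp'].
by apply/le_anti; rewrite minp // minp'.
Qed.

Definition dominates x q p :=
  [&& wred x q <= wred x p, wgreen x q <= wgreen x p &
      (wred x q < wred x p) || (wgreen x q < wgreen x p)].

Definition minimal_pathb x p :=
  is_path u v p && all (fun q => is_path u v q ==> ~~ dominates x q p) paths.

Lemma minimal_pathP x p :
  reflect (minimal_path src tgt red x u v p) (minimal_pathb x p).
Proof.
apply: (iffP andP) => [[pp /allP nodom] | [pp nodom]]; split => //.
  move=> [q [pq le_red le_green lt]]; have := implyP (nodom q (mem_paths pq)) pq.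
  by rewrite /dominates le_red le_green lt.
apply/allP => q _; apply/implyP => pq; apply/negP => /and3P [le_red le_green lt].
by apply: nodom; exists q.
Qed.

Lemma exists_minimal_path_le x q : is_path u v q ->
  exists p, [/\ minimal_pathb x p, wred x p <= wred x q & wgreen x p <= wgreen x q].
Proof.
move=> pq.
pose below s := (wred x s <= wred x q) && (wgreen x s <= wgreen x q).
have [|p /argmin_pathP [pp /andP [le_red le_green] minp]] :=
  exists_argmin_path (Q := below) (fun s => wred x s + wgreen x s).
  by exists q; rewrite pq /below !lexx.
exists p; split => //; apply/andP; split => //.
apply/allP => s _; apply/implyP => ps; apply/negP => /and3P [h1 h2 h3].
have := minp s ps; rewrite /below (le_trans h1) ?(le_trans h2) //.
by case/orP: h3 => h3 /(_ isT); lra.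
Qed.

Definition r_tot_gtb x r :=
  all (fun s => is_path u v s && all red s ==> (r < wred x s)) paths.

Definition Delta_leb x r c :=
  ~~ has (fun q => minimal_pathb x q && (r < wred x q)) paths ||
  has (fun q => [&& minimal_pathb x q, r < wred x q & wred x q <= c]) paths.

Lemma r_tot_argmin x p : argmin_path (all red) (wred x) p ->
  r_tot src tgt red x u v = wred x p.
Proof.
move=> /argmin_pathP [pp redp minp].
by apply: inf_eq_min; [exists p | move=> _ [s [ps reds ->]]; exact: minp].
Qed.

Lemma r_tot_gtP x r : (exists s, is_path u v s && all red s) ->
  reflect (r < r_tot src tgt red x u v) (r_tot_gtb x r).
Proof.
move=> /(exists_argmin_path (wred x)) /cid [p minp].
rewrite (r_tot_argmin minp); case/argmin_pathP: minp => pp redp minp.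
apply: (iffP allP) => [r_min | lt_p s _].
  by apply: (implyP (r_min p (mem_paths pp))); rewrite pp.
by apply/implyP => /andP [ps reds]; exact: lt_le_trans lt_p (minp s ps reds).
Qed.

Lemma Delta_argmin x r p :
  argmin_path (fun q => minimal_pathb x q && (r < wred x q)) (wred x) p ->
  Delta src tgt red x u v r = wred x p.
Proof.
move=> /argmin_pathP [pp /andP [mp rp] minp].
apply: inf_eq_min; first by exists p; split => //; exact/minimal_pathP.
move=> _ [q [/minimal_pathP mq rq ->]]; apply: minp; rewrite ?mq ?rq //.
by case/andP: mq.
Qed.

(* When no minimal path has red weight above [r], [Delta] is the infimum of the
   empty set, which is [0]. *)
Lemma Delta_leP x r c : 0 <= c ->
  reflect (Delta src tgt red x u v r <= c) (Delta_leb x r c).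
Proof.
move=> c_ge0; rewrite /Delta_leb.
case: (boolP (has _ _)) => [above | none] /=; last first.
  rewrite /Delta (_ : [set t | _] = set0) ?inf0; first exact: ReflectT.
  apply/seteqP; split => // t [q [/minimal_pathP mq rq _]].
  by move/hasPn: none => /(_ q (mem_paths (proj1 (andP mq)))); rewrite mq rq.
have [|p minp] :=
  cid (exists_argmin_path (Q := fun q => minimal_pathb x q && (r < wred x q)) (wred x) _).
  by case/hasP: above => q _ /andP [mq rq]; exists q; rewrite mq rq (proj1 (andP mq)).
rewrite (Delta_argmin minp); case/argmin_pathP: minp => pp /andP [mp rp] minp.
apply: (iffP hasP) => [[q _ /and3P [mq rq le_q]] | le_p].
  by apply: le_trans le_q; apply: minp; rewrite ?mq ?rq //; case/andP: mq.
by exists p; rewrite ?(mem_paths pp) ?mp ?rp.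
Qed.

Definition wred_except x e s := \sum_(i <- s | red i && (i != e)) x i.

Lemma wred_except_notin x e s : e \notin s -> wred_except x e s = wred x s.
Proof.
move=> es; rewrite /wred_except /wred big_seq_cond [RHS]big_seq_cond.
apply: eq_bigl => i; case: (boolP (i \in s)) => //= i_s.
by rewrite (_ : i != e) ?andbT //; apply: contraNneq es => <-.
Qed.

Lemma wred_exceptE x e s : uniq s -> e \in s -> red e ->
  wred x s = x e + wred_except x e s.
Proof.
move=> us es re; rewrite /wred /wred_except big_mkcond (bigD1_seq e) //= re.
by rewrite big_mkcondl.
Qed.

Lemma wred_le_subset x p q : (forall i, 0 <= x i) -> uniq p -> uniq q ->
  (forall i, i \in q -> red i -> i \in p) -> wred x q <= wred x p.
Proof.
move=> x_ge0 up uq qp; rewrite /wred !(big_mkcond red) !big_uniq //=.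
rewrite [leLHS]big_mkcond [leRHS]big_mkcond /=; apply: ler_sum => i _.
case: (boolP (i \in q)) => [iq | _]; last by case: (i \in p); case: (red i).
by case: (boolP (red i)) => [ri | _]; rewrite ?(qp i iq ri) ?x_ge0 //; case: (i \in p).
Qed.

Lemma wgreen_gt0 x s : (forall i, 0 < x i) -> ~~ all red s -> 0 < wgreen x s.
Proof.
move=> x_gt0 /allPn [e es ge]; rewrite /wgreen (big_rem e es) /= ge.
by rewrite ltr_pwDl // sumr_ge0 // => i _; exact: ltW.
Qed.

Lemma wred_greener_argmin_le x r c p q : is_path u v p -> wred x p <= r ->
  argmin_path (fun s => wgreen x s < wgreen x p) (wred x) q ->
  r < wred x q -> Delta_leb x r c -> wred x q <= c.
Proof.
move=> pp lep /argmin_pathP [pq ltq minq] rq.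
case/orP => [/hasPn none | /hasP [q' _ /and3P [mq' rq' leq']]].
  have [q' [mq' le_red le_green]] := exists_minimal_path_le x pq.
  have pq' := proj1 (andP mq').
  have ge_red := minq q' pq' (le_lt_trans le_green ltq).
  by have := none q' (mem_paths pq'); rewrite mq' (lt_le_trans rq ge_red).
apply: le_trans leq'; apply: minq; first by case/andP: mq'.
rewrite ltNge; apply/negP => le_green.
case/andP: mq' => _ /allP /(_ p (mem_paths pp)) /implyP /(_ pp).
by rewrite /dominates (le_trans lep (ltW rq')) le_green (le_lt_trans lep rq').
Qed.

Lemma low_high_paths x r c : (forall i, 0 < x i) -> 0 <= r ->
  (exists s, is_path u v s && all (fun i => ~~ red i) s) ->
  (exists s, is_path u v s && all red s) ->
  r_tot_gtb x r -> Delta_leb x r c ->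
  exists p q, [/\ argmin_path (fun s => wred x s <= r) (wgreen x) p,
    argmin_path (fun s => wgreen x s < wgreen x p) (wred x) q & r < wred x q <= c].
Proof.
move=> x_gt0 r_ge0 [g /andP [pg greeng]] [b /andP [pb redb]] rtot Dle.
have [|p lowp] := exists_argmin_path (Q := fun s => wred x s <= r) (wgreen x).
  by exists g; rewrite pg /wred big_hasC // -all_predC.
case/argmin_pathP: (lowp) => pp lep minp.
have green_p : 0 < wgreen x p.
  apply: wgreen_gt0 => //; apply/negP => redp.
  have := implyP (allP rtot p (mem_paths pp)); rewrite pp redp => /(_ isT).
  by rewrite ltNge lep.
have [|q highq] := exists_argmin_path (Q := fun s => wgreen x s < wgreen x p) (wred x).
  by exists b; rewrite pb /wgreen big_hasC //; apply/hasPn => i /(allP redb) ->.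
exists p, q; split => //; case/argmin_pathP: (highq) => pq ltq _.
have rq : r < wred x q by rewrite ltNge; apply/negP => /(minp q pq); rewrite leNgt ltq.
by rewrite rq (wred_greener_argmin_le pp lep highq rq Dle).
Qed.

(* Both choices see [x] only through [wgreen x] and [wred_except x e], never
   through [x e]. *)
Definition pivot x e r p q :=
  argmin_path (fun s => (e \notin s) && (wred_except x e s <= r)) (wgreen x) p &&
  argmin_path (fun s => (e \in s) && (wgreen x s < wgreen x p)) (wred_except x e) q.

Lemma pivot_wred_except_eq x e r p q p' q' :
  pivot x e r p q -> pivot x e r p' q' -> wred_except x e q = wred_except x e q'.
Proof.
move=> /andP [lowp highq] /andP [lowp' highq'].
by rewrite (argmin_path_eq lowp lowp') in highq; exact: argmin_path_eq highq highq'.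
Qed.

Lemma exists_pivot x r c : (forall i, 0 < x i) -> 0 <= r ->
  (exists s, is_path u v s && all (fun i => ~~ red i) s) ->
  (exists s, is_path u v s && all red s) ->
  r_tot_gtb x r -> Delta_leb x r c ->
  exists e p q, [/\ red e, pivot x e r p q & r < x e + wred_except x e q <= c].
Proof.
move=> x_gt0 r_ge0 hg hr rtot Dle.
have [p [q [lowp highq /andP [rq qc]]]] := low_high_paths x_gt0 r_ge0 hg hr rtot Dle.
case/argmin_pathP: lowp => pp lep minp; case/argmin_pathP: highq => pq ltq minq.
have [e eq /andP [re ep]] : exists2 e, e \in q & red e && (e \notin p).
  apply/hasP; apply: contraTT rq => /hasPn out; rewrite -leNgt.
  apply: le_trans lep; apply: wred_le_subset (path_uniq pp) (path_uniq pq) _.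
    by move=> i; exact: ltW.
  by move=> i iq ri; have := out i iq; rewrite ri negbK.
have splitq := wred_exceptE x (path_uniq pq) eq re.
exists e, p, q; split => //; last by rewrite -splitq rq qc.
apply/andP; split; apply/argmin_pathP; split => //.
- by rewrite ep wred_except_notin.
- by move=> s ps /andP [es les]; apply: minp; rewrite -?(wred_except_notin x es).
- by rewrite eq ltq.
move=> s ps /andP [es lts]; have := minq s ps lts.
by rewrite splitq (wred_exceptE x (path_uniq ps) es re) lerD2l.
Qed.

End weighted_paths.

Section independence.
Context (R : realType) d (Omega : measurableType d) (P : probability Omega R)
  (I : finType) (Pe : pred I) (X : I -> Omega -> R).
Hypothesis mX : forall i, Pe i -> measurable_fun setT (X i).
Hypothesis indX : independent_rvs P Pe X.
Variable j : I.
Hypothesis Pj : Pe j.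

Definition cylinders_off : set (set Omega) :=
  [set B | exists (S : {set I}) (A : I -> set R),
    [/\ (forall i, i \in S -> Pe i && (i != j)), (forall i, measurable (A i)) &
        B = \bigcap_(i in [set i | i \in S]) (X i @^-1` A i)]].

(* The generating class in the form expected by
   [g_sigma_algebra_measure_unique_trace]. *)
Definition cylinders_off_trace := [set B | cylinders_off B /\ B `<=` setT].

Lemma measurable_preimage i A : Pe i -> measurable A -> measurable (X i @^-1` A).
Proof. by move=> Pi mA; have := mX Pi measurableT mA; rewrite setTI. Qed.

Lemma cylinders_off_measurable : cylinders_off_trace `<=` measurable.
Proof.
move=> _ [[S [A [SP mA ->]]] _]; apply: fin_bigcap_measurable.
  exact: finite_finset.
by move=> i /= /SP /andP [Pi _]; exact: measurable_preimage.
Qed.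

Lemma cylinders_off_setI_closed : setI_closed cylinders_off_trace.
Proof.
move=> _ _ [[S1 [A1 [SP1 mA1 ->]]] _] [[S2 [A2 [SP2 mA2 ->]]] _]; split => //.
pose A i := (if i \in S1 then A1 i else setT) `&` (if i \in S2 then A2 i else setT).
exists (S1 :|: S2), A; split.
- by move=> i; rewrite finset.in_setU => /orP [/SP1 | /SP2].
- by move=> i; apply: measurableI; case: ifP.
apply/seteqP; split => o.
  move=> [in1 in2] i /=; rewrite finset.in_setU => _; split.
    by case: ifP => // i1; apply: in1.
  by case: ifP => // i2; apply: in2.
move=> oA; split => i /= iS; have := oA i; rewrite /A /= finset.in_setU iS /=.
  by move=> /(_ isT) [].
by rewrite orbT => /(_ isT) [].
Qed.

Lemma indep_cylinder_off B J : cylinders_off B -> measurable J ->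
  P (B `&` X j @^-1` J) = (P (X j @^-1` J) * P B)%E.
Proof.
case=> S [A [SP mA ->]] mJ.
have jS : j \notin S by apply/negP => /SP; rewrite eqxx andbF.
have neq i : i \in S -> (i == j) = false.
  by move=> iS; apply/negbTE; apply: contraNneq jS => <-.
pose A' i := if i == j then J else A i.
have PjS i : i \in j |: S -> Pe i.
  by rewrite finset.in_setU1 => /orP [/eqP -> | /SP /andP []].
have := indX PjS (_ : forall i, measurable (A' i)); rewrite big_setU1 //=.
have -> : \bigcap_(i in [set i | i \in j |: S]) (X i @^-1` A' i) =
    \bigcap_(i in [set i | i \in S]) (X i @^-1` A i) `&` X j @^-1` J.
  apply/seteqP; split => o.
    move=> oA'; split; last by have := oA' j; rewrite /= finset.in_setU1 /A' !eqxx; apply.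
    by move=> i /= iS; have := oA' i; rewrite /= finset.in_setU1 iS orbT /A' neq //; apply.
  move=> [inA inJ] i /=; rewrite finset.in_setU1 /A' => /orP [/eqP -> | iS].
    by rewrite eqxx.
  by rewrite neq //; exact: inA.
move=> -> //; last by move=> i; rewrite /A'; case: eqP.
rewrite /A' eqxx (indX (fun i iS => proj1 (andP (SP i iS))) mA); congr (_ * _)%E.
by apply: eq_bigr => i iS; rewrite neq.
Qed.

Lemma cylinders_off_generated_measurable B :
  <<s setT, cylinders_off_trace >> B -> measurable B.
Proof.
apply: smallest_sub; first exact: sigma_algebra_measurable.
exact: cylinders_off_measurable.
Qed.

(* Dynkin's uniqueness of measures: [B |-> P (B `&` X j @^-1` J)] and
   [B |-> P (X j @^-1` J) * P B] agree on the generating cylinders. *)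
Lemma indep_generated_off B J : measurable J -> <<s setT, cylinders_off_trace >> B ->
  P (B `&` X j @^-1` J) = (P (X j @^-1` J) * P B)%E.
Proof.
move=> mJ sB; have mC : measurable (X j @^-1` J) by exact: measurable_preimage.
have PC_fin : P (X j @^-1` J) \is a fin_num.
  by rewrite ge0_fin_numE ?measure_ge0 // (le_lt_trans (probability_le1 _ mC)) ?ltry.
have c_ge0 : 0 <= fine (P (X j @^-1` J)) by apply: fine_ge0; exact: measure_ge0.
have cE : (fine (P (X j @^-1` J)))%:E = P (X j @^-1` J) by rewrite fineK.
have E := g_sigma_algebra_measure_unique_trace cylinders_off setT measurableT
  cylinders_off_measurable cylinders_off_setI_closed (mrestr P mC)
  (mscale (NngNum c_ge0) P).
rewrite -[LHS]/(mrestr P mC B) (E _ _ _ _ B sB); first by rewrite -[in RHS]cE.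
- rewrite -[LHS]/(P (setT `&` X j @^-1` J)).
  by rewrite -[RHS]/((fine (P (X j @^-1` J)))%:E * P setT)%E probability_setT mule1 cE setTI.
- move=> A [CA _]; rewrite -[LHS]/(P (A `&` X j @^-1` J)) indep_cylinder_off //.
  by rewrite -[in LHS]cE.
- change (P (setT `&` X j @^-1` J) < +oo)%E; rewrite setTI.
  by rewrite (le_lt_trans (probability_le1 _ mC)) ?ltry.
- by [].
Qed.

Lemma measurable_fun_off i : Pe i -> i != j ->
  measurable_fun (setT : set (g_sigma_algebraType cylinders_off_trace)) (X i).
Proof.
move=> Pi ij _ Y mY; rewrite setTI; apply: sub_gen_smallest; split => //.
exists [set i]%SET, (fun _ => Y); split => //.
  by move=> k; rewrite finset.in_set1 => /eqP ->; rewrite Pi ij.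
apply/seteqP; split => o /=; first by move=> Xo k /= /set1P ->.
by apply; exact/set1P.
Qed.

End independence.

Section bounded_density.
Context (R : realType) d (Omega : measurableType d) (P : probability Omega R)
  (X : Omega -> R) (f : R -> R).
Hypothesis dX : has_density P X f.

Lemma prob_itv_le_density (c a b : R) : measurable_fun setT f ->
  (forall t, 0 <= f t <= c) -> a <= b ->
  (P (X @^-1` `]a, b]) <= (c * (b - a))%:E)%E.
Proof.
move=> mf f_bnd ab; rewrite dX; last exact: measurable_itv.
apply: (@le_trans _ _ (\int[lebesgue_measure]_(t in `]a, b]) c%:E)%E).
  apply: ge0_le_integral => //.
  - by move=> t _; rewrite lee_fin; case/andP: (f_bnd t).
  - by apply/measurable_realfun.measurable_EFinP; exact: measurable_funTS mf.
  - by move=> t _; rewrite lee_fin; case/andP: (f_bnd t).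
have c_ge0 : 0 <= c by case/andP: (f_bnd 0) => /le_trans; apply.
rewrite integral_cst /=; last exact: measurable_itv.
rewrite lebesgue_measure_itv /=; case: ifP => _; first by rewrite -EFinB -EFinM.
by rewrite mule0 lee_fin mulr_ge0 // subr_ge0.
Qed.

Lemma prob_le0_density : (forall t, t <= 0 -> f t = 0) ->
  P (X @^-1` `]-oo, 0]) = 0%E.
Proof.
move=> f0; rewrite dX; last exact: measurable_itv.
by apply: integral0_eq => t /=; rewrite in_itv /= => /f0 ->.
Qed.

End bounded_density.

Lemma exists_mesh_bin (R : realFieldType) (dl t : R) K :
  0 < dl -> 0 < t -> t <= K%:R * dl ->
  exists2 k, (k < K)%N & k%:R * dl < t <= k.+1%:R * dl.
Proof.
move=> dl_gt0 t_gt0; elim: K => [|K IH] tK.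
  by move: tK; rewrite mul0r => /(lt_le_trans t_gt0); rewrite ltxx.
have [le_t | lt_t] := leP t (K%:R * dl).
  by have [k kK bin] := IH le_t; exists k => //; rewrite ltnS ltnW.
by exists K; rewrite ?lt_t.
Qed.

Lemma lee_addn_div (R : realType) (a : \bar R) (b c : R) : 0 <= c ->
  (forall n, a <= (b + c / n.+1%:R)%:E)%E -> (a <= b%:E)%E.
Proof.
move=> c_ge0; case: a => [a | | ] le_a;
  [| by have := le_a 0%N; rewrite leye_eq | exact: leNye].
rewrite lee_fin; apply/ler_addgt0Pr => eta eta_gt0.
pose n := Num.Def.archi_bound (c / eta).
have : c / eta < n%:R by apply: archi_boundP; rewrite divr_ge0 // ltW.
rewrite ltr_pdivrMr // => lt_c.
apply: le_trans (_ : b + c / n.+1%:R <= _); first by rewrite -lee_fin.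
rewrite lerD2l ler_pdivrMr ?ltr0n //; apply/ltW/(lt_le_trans lt_c).
by rewrite mulrC; apply: ler_wpM2l; [exact: ltW | rewrite ler_nat].
Qed.

Lemma measure_bigsetU_le d (T : measurableType d) (R : realType)
    (mu : {measure set T -> \bar R}) (I : Type) (s : seq I) (Q : pred I)
    (F : I -> set T) : (forall i, Q i -> measurable (F i)) ->
  (mu (\big[setU/set0]_(i <- s | Q i) F i) <= \sum_(i <- s | Q i) mu (F i))%E.
Proof.
move=> mF; elim: s => [|i s IH]; first by rewrite !big_nil measure0.
rewrite !big_cons; case: ifP => // Qi.
apply: le_trans (measureU2 _ _ _) _; [exact: mF | exact: bigsetU_measurable |].
exact: leeD2l.
Qed.

Section corollary.
Context (R : realType) (d : measure_display) (Omega : measurableType d)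
  (P : probability Omega R) (V E : finType) (src tgt : E -> V) (red : E -> bool)
  (u v : V) (wg : E -> R) (W : E -> Omega -> R) (f : E -> R -> R) (phi : E -> R).
Hypothesis wg_gt0 : forall e, ~~ red e -> 0 < wg e.
Hypothesis green_path : exists s, is_path src tgt u v s && all (fun e => ~~ red e) s.
Hypothesis red_path : exists s, is_path src tgt u v s && all red s.
Hypothesis mW : forall e, red e -> measurable_fun setT (W e).
Hypothesis indW : independent_rvs P red W.
Hypothesis mf : forall e, red e -> measurable_fun setT (f e).
Hypothesis f_le0 : forall e, red e -> forall t, t <= 0 -> f e t = 0.
Hypothesis f_bnd : forall e, red e -> forall t, 0 < t -> 0 <= f e t <= phi e.
Hypothesis dW : forall e, red e -> has_density P (W e) (f e).
Variables r eps : R.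
Hypotheses (r_ge0 : 0 <= r) (eps_gt0 : 0 < eps).

Local Notation paths := (seqs_upto E #|E|).

Definition weights (o : Omega) : E -> R := fun e => if red e then W e o else wg e.
Local Notation w := weights.

Definition event := [set o | r < r_tot src tgt red (w o) u v /\
                             Delta src tgt red (w o) u v r <= r + eps].

Lemma measurable_wred s : measurable_fun setT (fun o => wred red (w o) s).
Proof.
apply: measurable_sum_cond => e _; rewrite /w.
by case re: (red e); [exact: mW | exact: measurable_cst].
Qed.

Lemma measurable_wgreen s : measurable_fun setT (fun o => wgreen red (w o) s).
Proof. by apply: measurable_sum_cond => e /negbTE ge; rewrite /w ge. Qed.

Lemma eventE : event = [set o | r_tot_gtb src tgt red u v (w o) r &&
                                Delta_leb src tgt red u v (w o) r (r + eps)].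
Proof.
have c_ge0 : 0 <= r + eps by rewrite addr_ge0 // ltW.
apply/seteqP; split => o /=; have DleP := Delta_leP src tgt red u v (w o) r c_ge0.
  by move=> [/(r_tot_gtP _ _ red_path) -> /DleP].
by move=> /andP [/(r_tot_gtP _ _ red_path) rtot /DleP].
Qed.

Lemma measurable_event : measurable event.
Proof.
rewrite eventE; apply: measurable_bool_set.
rewrite /r_tot_gtb /Delta_leb /minimal_pathb /dominates.
measurable_bool ltac:(first [exact: measurable_wred | exact: measurable_wgreen]).
Qed.

Lemma phi_ge0 e : red e -> 0 <= phi e.
Proof. by move=> re; case/andP: (f_bnd re ltr01) => /le_trans; apply. Qed.

Lemma density_bnd e : red e -> forall t, 0 <= f e t <= phi e.
Proof.
move=> re t; have [t_le0 | t_gt0] := leP t 0; last exact: f_bnd.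
by rewrite f_le0 // lexx phi_ge0.
Qed.

Section edge.
Variables (e : E) (dl : R) (K : nat).
Hypotheses (re : red e) (dl_gt0 : 0 < dl).

Local Notation T_off := (g_sigma_algebraType (cylinders_off_trace red W e)).

Lemma measurable_wred_except_off s :
  measurable_fun (setT : set T_off) (fun o => wred_except red (w o) e s).
Proof.
apply: measurable_sum_cond => i /andP [ri ie]; rewrite /w ri.
exact: measurable_fun_off.
Qed.

Lemma measurable_wgreen_off s :
  measurable_fun (setT : set T_off) (fun o => wgreen red (w o) s).
Proof. by apply: measurable_sum_cond => i /negbTE gi; rewrite /w gi. Qed.

Definition pivot_bin k : set Omega :=
  [set o | has (fun p => has (fun q => pivot src tgt red u v (w o) e r p q &&
     (k%:R * dl < r + eps - wred_except red (w o) e q <= k.+1%:R * dl)) paths) paths].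

Lemma pivot_bin_generated k : <<s setT, cylinders_off_trace red W e >> (pivot_bin k).
Proof.
have : measurable (pivot_bin k : set T_off); last by [].
apply: measurable_bool_set; rewrite /pivot /argmin_path.
measurable_bool
  ltac:(first [exact: measurable_wred_except_off | exact: measurable_wgreen_off]).
Qed.

Lemma pivot_bin_measurable k : measurable (pivot_bin k).
Proof. exact: (cylinders_off_generated_measurable (j := e) mW (pivot_bin_generated k)). Qed.

Lemma pivot_bin_trivIset : trivIset setT pivot_bin.
Proof.
move=> k k' _ _ [y [/hasP [p _ /hasP [q _ /andP [pv /andP [kt tk]]]]
                 /hasP [p' _ /hasP [q' _ /andP [pv' /andP [kt' tk']]]]]].
rewrite (pivot_wred_except_eq pv pv') in kt tk.
have bin_lt m n : (m < n)%N -> m.+1%:R * dl <= n%:R * dl.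
  by move=> mn; rewrite ler_wpM2r ?ler_nat // ltW.
apply/eqP; rewrite eqn_leq; apply/andP; split; rewrite leqNgt; apply/negP.
  by move=> /bin_lt; rewrite leNgt (lt_le_trans kt tk').
by move=> /bin_lt; rewrite leNgt (lt_le_trans kt' tk).
Qed.

Definition bin_hit k := W e @^-1` `]k%:R * dl - eps, k.+1%:R * dl].

Definition bad_edge :=
  W e @^-1` `]-oo, 0] `|` \big[setU/set0]_(k < K) (pivot_bin k `&` bin_hit k).

Lemma measurable_bad_edge : measurable bad_edge.
Proof.
apply: measurableU; first by apply: (measurable_preimage mW re); exact: measurable_itv.
apply: bigsetU_measurable => k _; apply: measurableI.
  exact: pivot_bin_measurable.
by apply: (measurable_preimage mW re); exact: measurable_itv.
Qed.

(* The bins are disjoint events independent of [W e], while [W e] lands in a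
   window of length [dl + eps] on each of them. *)
Lemma prob_bad_edge_le : (P bad_edge <= (phi e * (dl + eps))%:E)%E.
Proof.
have mhit k : measurable (bin_hit k).
  by apply: (measurable_preimage mW re); exact: measurable_itv.
have mbin k : measurable (pivot_bin k `&` bin_hit k).
  exact: measurableI (pivot_bin_measurable k) (mhit k).
have mneg : measurable (W e @^-1` `]-oo, 0]).
  by apply: (measurable_preimage mW re); exact: measurable_itv.
have mU : measurable (\big[setU/set0]_(k < K) (pivot_bin k `&` bin_hit k)).
  by apply: bigsetU_measurable => k _; exact: mbin.
apply: le_trans (measureU2 P mneg mU) _.
rewrite [X in (X + _)%E](_ : _ = 0%E) ?add0e; last exact: prob_le0_density (dW re) (f_le0 re).
apply: le_trans (measure_bigsetU_le P _ (fun (k : 'I_K) _ => mbin k)) _.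
have le_hit k :
    (P (pivot_bin k `&` bin_hit k) <= (phi e * (dl + eps))%:E * P (pivot_bin k))%E.
  rewrite (indep_generated_off mW indW re _ (pivot_bin_generated k)); last first.
    exact: measurable_itv.
  apply: lee_wpmul2r => //.
  rewrite (_ : dl + eps = k.+1%:R * dl - (k%:R * dl - eps)); last first.
    by rewrite -natr1 mulrDl mul1r; lra.
  apply: prob_itv_le_density; [exact: dW | exact: mf | exact: density_bnd |].
  by rewrite (@le_trans _ _ (k%:R * dl)) ?gerBl ?ler_wpM2r ?ler_nat ?ltW.
apply: le_trans (_ : \sum_(k < K) ((phi e * (dl + eps))%:E * P (pivot_bin k)) <= _)%E.
  by apply: lee_sum => k _; exact: le_hit.
rewrite -ge0_sume_distrr; last by move=> k _; exact: measure_ge0.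
rewrite -[leRHS]mule1; apply: lee_wpmul2l.
  by rewrite lee_fin mulr_ge0 ?addr_ge0 ?phi_ge0 ?ltW.
rewrite -measure_bigsetU //; [|exact: pivot_bin_measurable|exact: pivot_bin_trivIset].
by apply: probability_le1; apply: bigsetU_measurable => k _; exact: pivot_bin_measurable.
Qed.

End edge.

Lemma event_sub_bad_edges dl K : 0 < dl -> K%:R * dl = r + eps ->
  event `<=` \big[setU/set0]_(e | red e) bad_edge e dl K.
Proof.
move=> dl_gt0 K_dl o; rewrite eventE => /andP [rtot Dle]; rewrite -bigcup_seq_cond.
have [[e [re We]] | W_gt0] := pselect (exists e, red e /\ W e o <= 0).
  by exists e; rewrite /= ?mem_index_enum ?re //; left; rewrite /= in_itv.
have w_gt0 i : 0 < w o i.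
  rewrite /w; case: ifP => [ri | /negbT /wg_gt0 //].
  by rewrite ltNge; apply/negP => Wi; apply: W_gt0; exists i.
have [e [p [q [re pv /andP [lo hi]]]]] :=
  exists_pivot w_gt0 r_ge0 green_path red_path rtot Dle.
exists e; first by rewrite /= mem_index_enum re.
right; rewrite -(bigcup_mkord K (fun k => pivot_bin e dl k `&` bin_hit e dl k)).
have rest_ge0 : 0 <= wred_except red (w o) e q.
  by apply: sumr_ge0 => i _; exact: ltW.
have We : w o e = W e o by rewrite /w re.
have We_gt0 := w_gt0 e; rewrite We in lo hi We_gt0.
set rest := wred_except red (w o) e q in rest_ge0 lo hi *.
have t_gt0 : 0 < r + eps - rest by lra.
have t_le : r + eps - rest <= K%:R * dl by rewrite K_dl; lra.
have [k kK /andP [kt tk]] := exists_mesh_bin dl_gt0 t_gt0 t_le.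
exists k => //; split; last by rewrite /bin_hit /= in_itv /=; apply/andP; split; lra.
case/andP: (pv) => /argmin_pathP [pp _ _] /argmin_pathP [pq _ _].
apply/hasP; exists p; first exact: mem_paths pp.
apply/hasP; exists q; first exact: mem_paths pq.
by rewrite pv /=; apply/andP; split; [exact: kt | exact: tk].
Qed.

Lemma prob_event_le n : (P event <= ((\sum_(e | red e) phi e) * eps +
  (\sum_(e | red e) phi e) * (r + eps) / n.+1%:R)%:E)%E.
Proof.
pose dl := (r + eps) / n.+1%:R.
have dl_gt0 : 0 < dl by rewrite divr_gt0 ?ltr0n // ltr_wpDl.
have K_dl : n.+1%:R * dl = r + eps by rewrite mulrC divfK // pnatr_eq0.
have mbad e : red e -> measurable (bad_edge e dl n.+1).
  by move=> re; exact: measurable_bad_edge.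
apply: le_trans (le_measure P _ _ (event_sub_bad_edges dl_gt0 K_dl)) _.
- by rewrite inE; exact: measurable_event.
- by rewrite inE; exact: bigsetU_measurable.
apply: le_trans (measure_bigsetU_le P _ mbad) _.
rewrite addrC -mulrA -mulrDr big_distrl /= -sumEFin; apply: lee_sum => e re.
exact: prob_bad_edge_le.
Qed.

End corollary.

Unset Implicit Arguments.

Theorem corollary6 (R : realType) (d : measure_display) (Omega : measurableType d)
  (P : probability Omega R)
  (V E : finType) (src tgt : E -> V) (red : E -> bool) (u v : V)
  (wg : E -> R) (W : E -> Omega -> R) (f : E -> R -> R) (phi : E -> R) :
  (* green edges have fixed positive weights *)
  (forall e, ~~ red e -> 0 < wg e) ->
  (* there is an all-green path and an all-red path from u to v *)
  (exists s, is_path src tgt u v s && all (fun e => ~~ red e) s) ->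
  (exists s, is_path src tgt u v s && all red s) ->
  (* red weights: independent random variables with densities f e on (0, oo)
     bounded by phi e > 0 *)
  (forall e, red e -> measurable_fun setT (W e)) ->
  independent_rvs P red W ->
  (forall e, red e -> 0 < phi e) ->
  (forall e, red e -> measurable_fun setT (f e)) ->
  (forall e, red e -> forall x, x <= 0 -> f e x = 0) ->
  (forall e, red e -> forall x, 0 < x -> 0 <= f e x <= phi e) ->
  (forall e, red e -> has_density P (W e) (f e)) ->
  forall r eps : R, 0 <= r -> 0 < eps ->
  let w (o : Omega) : E -> R := fun e => if red e then W e o else wg e in
  (P [set o | (r < r_tot src tgt red (w o) u v)%R /\
             (Delta src tgt red (w o) u v r <= r + eps)%R] <=
  ((\sum_(e | red e) phi e) * eps)%:E)%E.
Proof.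
move=> wg_gt0 green_path red_path mW indW phi_gt0 mf f_le0 f_bnd dW r eps r_ge0 eps_gt0 /=.
apply: (lee_addn_div (c := (\sum_(e | red e) phi e) * (r + eps))).
  apply: mulr_ge0; last by rewrite addr_ge0 // ltW.
  by apply: sumr_ge0 => e /phi_gt0 /ltW.
exact: (prob_event_le wg_gt0 green_path red_path mW indW mf f_le0 f_bnd dW r_ge0 eps_gt0).
Qed.
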